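(* Consider the linear content-access game described in the context, with $\tau>0$, $\pi_G\in[0,1]$, $\pi_B=1-\pi_G$, $\lambda_{ps}(G)\ge\lambda_{ps}(B)>0$ and $\lambda_{pu}>0$. Then: (i) if $\frac{\pi_G}{\lambda_{ps}(G)} \geq \frac{\pi_B}{\lambda_{ps}(B)}$, then $\alpha=0$ is a symmetric Wardrop equilibrium; (ii) if $\frac{\pi_G}{\lambda_{ps}(G)} \leq \frac{\pi_B}{\lambda_{ps}(B)}$ and $\frac{\pi_G}{\lambda_{ps}(G)+\lambda_{pu}} \geq \frac{\pi_B}{\lambda_{ps}(B)+\lambda_{pu}}$, then every threshold $\alpha$ with $0\le\alpha\le\beta_{\tau,B}$ is a symmetric Wardrop equilibrium; (iii) if $\frac{\pi_G}{\lambda_{ps}(G)} \leq \frac{\pi_B}{\lambda_{ps}(B)}$ and $\frac{\pi_G}{\lambda_{ps}(G)+\lambda_{pu}} < \frac{\pi_B}{\lambda_{ps}(B)+\lambda_{pu}}$, then the threshold $\alpha=\beta_{\tau,B}$ (i.e. $\alpha$ with $\alpha=\beta_{\tau,B}$ when all others play $\alpha$) is a symmetric Wardrop equilibrium.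
   Context: A content has a type $\theta\in\{G,B\}$ (good/bad) and lifetime $\tau>0$. Users hold beliefs $\pi_G$ that the content is good and $\pi_B=1-\pi_G$ that it is bad. Each (pull) user uses a threshold strategy: access the content once its viewcount reaches a threshold. All users other than a tagged user use a common threshold $\alpha\ge 0$; the tagged user uses $\beta\ge0$ (a single user's deviation does not affect the viewcount). Linear dynamics: for type $\theta$, with push rate $\lambda_{ps}(\theta)>0$ and type-independent pull rate $\lambda_{pu}>0$, let $t_\alpha(\theta)=\alpha/\lambda_{ps}(\theta)$ and $X(t,\theta)=\lambda_{ps}(\theta)\,t+\lambda_{pu}\,(t-t_\alpha(\theta))^+$ for $t\ge0$. For $\beta\ge0$, $t_\beta(\theta)=\min\{t\ge 0: X(t,\theta)=\beta\}$. Let $\beta_{\tau,B}=X(\tau,B)$ (the value with $t_{\beta_{\tau,B}}(B)=\tau$; it depends on $\alpha$). The tagged user's utility is $U(\alpha,\beta)=\pi_G(\tau-t_\beta(G))-\pi_B(\tau-t_\beta(B))$ for $0\le\beta\le\beta_{\tau,B}$; a best response to $\alpha$ is a maximizer of $U(\alpha,\cdot)$ over $[0,\beta_{\tau,B}]$. A threshold $\alpha$ with $0\le\alpha\le\beta_{\tau,B}$ is a symmetric Wardrop equilibrium if $\beta=\alpha$ is a best response to $\alpha$. *)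

From Stdlib Require Import Reals Lra ClassicalEpsilon.
Open Scope R_scope.

Inductive ctype := G | B.

(* Viewcount of content of type th at time t when all other users use
   threshold alpha:  X(t,th) = lps(th) t + lpu (t - t_alpha(th))^+ . *)
Definition t_alpha (lps : ctype -> R) (alpha : R) (th : ctype) : R :=
  alpha / lps th.

Definition X (lps : ctype -> R) (lpu alpha : R) (th : ctype) (t : R) : R :=
  lps th * t + lpu * Rmax (t - t_alpha lps alpha th) 0.

Definition is_first_hit (lps : ctype -> R) (lpu alpha : R) (th : ctype)
  (beta t : R) : Prop :=
  0 <= t /\ X lps lpu alpha th t = beta /\
  (forall s, 0 <= s -> X lps lpu alpha th s = beta -> t <= s).

(* t_beta(th) = min { t >= 0 : X(t,th) = beta } (chosen by classical
   description; the minimum exists for beta >= 0 under the standing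
   assumptions). *)
Definition t_beta (lps : ctype -> R) (lpu alpha : R) (th : ctype) (beta : R) : R :=
  epsilon (inhabits 0) (is_first_hit lps lpu alpha th beta).

Definition beta_tauB (lps : ctype -> R) (lpu tau alpha : R) : R :=
  X lps lpu alpha B tau.

Definition U (piG : R) (lps : ctype -> R) (lpu tau alpha beta : R) : R :=
  piG * (tau - t_beta lps lpu alpha G beta)
  - (1 - piG) * (tau - t_beta lps lpu alpha B beta).

Definition best_response (piG : R) (lps : ctype -> R) (lpu tau alpha beta : R)
  : Prop :=
  0 <= beta <= beta_tauB lps lpu tau alpha /\
  forall b, 0 <= b <= beta_tauB lps lpu tau alpha ->
    U piG lps lpu tau alpha b <= U piG lps lpu tau alpha beta.

Definition symmetric_wardrop (piG : R) (lps : ctype -> R) (lpu tau alpha : R)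
  : Prop :=
  0 <= alpha <= beta_tauB lps lpu tau alpha /\
  best_response piG lps lpu tau alpha alpha.

(* The tagged user's first-hit time [t_beta] has the closed form
   [beta / lps] below the common threshold [alpha] and
   [alpha / lps + (beta - alpha) / (lps + lpu)] above it.  Hence, as a function
   of [beta], the utility [U] is piecewise linear with a kink at [alpha]: its
   slope is [piB / lps B - piG / lps G] below [alpha] and
   [piB / (lps B + lpu) - piG / (lps G + lpu)] above.  So [alpha] is a best
   response as soon as the first slope is nonnegative when there is room on
   the left of [alpha] and the second is nonpositive when there is room on its
   right.  In case (i) there is no room on the left, and the second condition
   follows from the first because [lps B <= lps G]; in case (iii) there is no
   room on the right. *)
From Stdlib Require Import Reals Lra ClassicalEpsilon.
Open Scope R_scope.

Lemma Rdiv_le_cross a b x y : 0 < x -> 0 < y -> a * y <= b * x -> a / x <= b / y.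
Proof.
  intros Hx Hy Hab.
  assert (Hxy : 0 < / (x * y)) by (apply Rinv_0_lt_compat; nra).
  assert (E : b / y - a / x = (b * x - a * y) * / (x * y)) by (field; lra).
  nra.
Qed.

Lemma Rdiv_le_uncross a b x y : 0 < x -> 0 < y -> a / x <= b / y -> a * y <= b * x.
Proof.
  intros Hx Hy Hab.
  assert (E : b * x - a * y = (b / y - a / x) * (x * y)) by (field; lra).
  assert (0 < x * y) by nra.
  nra.
Qed.

Lemma Rdiv_le_add_shift a b x y c :
  0 < x <= y -> 0 <= a -> 0 <= c -> a / x <= b / y -> a / (x + c) <= b / (y + c).
Proof.
  intros Hxy Ha Hc Hab.
  apply Rdiv_le_uncross in Hab; try lra.
  assert (Hba : a <= b) by nra.
  apply Rdiv_le_cross; nra.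
Qed.

Section FirstHitTime.

Variables (lps : ctype -> R) (lpu alpha : R) (th : ctype).
Hypotheses (Hlps : 0 < lps th) (Hlpu : 0 < lpu).

Definition hit_time (beta : R) : R :=
  if Rle_dec beta alpha then beta / lps th
  else alpha / lps th + (beta - alpha) / (lps th + lpu).

Lemma X_increasing s t : s < t -> X lps lpu alpha th s < X lps lpu alpha th t.
Proof.
  intros Hst; unfold X.
  assert (Rmax (s - t_alpha lps alpha th) 0 <= Rmax (t - t_alpha lps alpha th) 0)
    by (unfold Rmax; destruct Rle_dec, Rle_dec; lra).
  nra.
Qed.

Lemma X_nonneg t : 0 <= t -> 0 <= X lps lpu alpha th t.
Proof.
  intros Ht; unfold X.
  assert (0 <= Rmax (t - t_alpha lps alpha th) 0) by apply Rmax_r.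
  nra.
Qed.

Lemma X_hit_time beta : X lps lpu alpha th (hit_time beta) = beta.
Proof.
  unfold X, t_alpha, hit_time; destruct Rle_dec as [Hle | Hgt].
  - rewrite Rmax_right.
    + field; lra.
    + replace (beta / lps th - alpha / lps th) with (- ((alpha - beta) / lps th))
        by (field; lra).
      assert (0 <= (alpha - beta) / lps th) by (apply Rle_mult_inv_pos; lra).
      lra.
  - replace (alpha / lps th + (beta - alpha) / (lps th + lpu) - alpha / lps th)
      with ((beta - alpha) / (lps th + lpu)) by ring.
    rewrite Rmax_left.
    + field; lra.
    + apply Rle_mult_inv_pos; lra.
Qed.

Lemma hit_time_nonneg beta : 0 <= alpha -> 0 <= beta -> 0 <= hit_time beta.
Proof.
  intros Ha Hb; unfold hit_time; destruct Rle_dec.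
  - apply Rle_mult_inv_pos; lra.
  - assert (0 <= alpha / lps th) by (apply Rle_mult_inv_pos; lra).
    assert (0 <= (beta - alpha) / (lps th + lpu)) by (apply Rle_mult_inv_pos; lra).
    lra.
Qed.

Lemma is_first_hit_hit_time beta :
  0 <= alpha -> 0 <= beta -> is_first_hit lps lpu alpha th beta (hit_time beta).
Proof.
  intros Ha Hb; split; [|split].
  - exact (hit_time_nonneg beta Ha Hb).
  - exact (X_hit_time beta).
  - intros s _ Hs; apply Rnot_lt_le; intros Hlt.
    pose proof (X_increasing s _ Hlt) as Hmono.
    rewrite X_hit_time in Hmono; lra.
Qed.

Lemma t_beta_hit_time beta :
  0 <= alpha -> 0 <= beta -> t_beta lps lpu alpha th beta = hit_time beta.
Proof.
  intros Ha Hb.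
  pose proof (is_first_hit_hit_time beta Ha Hb) as Hhit.
  destruct (epsilon_spec (inhabits 0) (is_first_hit lps lpu alpha th beta)
              (ex_intro _ _ Hhit)) as [Heps0 [HepsX Hepsmin]].
  destruct Hhit as [Hhit0 [HhitX Hhitmin]].
  apply Rle_antisym; [apply Hepsmin | apply Hhitmin]; assumption.
Qed.

Lemma hit_time_sub_below beta :
  beta <= alpha -> hit_time beta - hit_time alpha = (beta - alpha) / lps th.
Proof.
  intros Hb; unfold hit_time.
  destruct (Rle_dec beta alpha), (Rle_dec alpha alpha); lra.
Qed.

Lemma hit_time_sub_above beta :
  alpha <= beta -> hit_time beta - hit_time alpha = (beta - alpha) / (lps th + lpu).
Proof.
  intros Hb; unfold hit_time.
  destruct (Rle_dec beta alpha), (Rle_dec alpha alpha); try lra.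
  replace beta with alpha by lra; field; lra.
Qed.

End FirstHitTime.

Section Utility.

Variables (piG lpu tau alpha : R) (lps : ctype -> R).
Hypotheses (HlG : 0 < lps G) (HlB : 0 < lps B) (Hlpu : 0 < lpu) (Halpha : 0 <= alpha).

Lemma U_sub_alpha b : 0 <= b ->
  U piG lps lpu tau alpha b - U piG lps lpu tau alpha alpha =
  (1 - piG) * (hit_time lps lpu alpha B b - hit_time lps lpu alpha B alpha)
  - piG * (hit_time lps lpu alpha G b - hit_time lps lpu alpha G alpha).
Proof.
  intros Hb; unfold U.
  rewrite !t_beta_hit_time by assumption.
  ring.
Qed.

Lemma U_le_alpha_below b :
  0 <= b <= alpha -> piG / lps G <= (1 - piG) / lps B ->
  U piG lps lpu tau alpha b <= U piG lps lpu tau alpha alpha.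
Proof.
  intros Hb Hslope.
  assert (E := U_sub_alpha b ltac:(lra)).
  rewrite !hit_time_sub_below in E by lra.
  replace ((1 - piG) * ((b - alpha) / lps B) - piG * ((b - alpha) / lps G))
    with ((b - alpha) * ((1 - piG) / lps B - piG / lps G)) in E by (field; lra).
  nra.
Qed.

Lemma U_le_alpha_above b :
  alpha <= b -> (1 - piG) / (lps B + lpu) <= piG / (lps G + lpu) ->
  U piG lps lpu tau alpha b <= U piG lps lpu tau alpha alpha.
Proof.
  intros Hb Hslope.
  assert (E := U_sub_alpha b ltac:(lra)).
  rewrite !hit_time_sub_above in E by lra.
  replace ((1 - piG) * ((b - alpha) / (lps B + lpu)) - piG * ((b - alpha) / (lps G + lpu)))
    with ((b - alpha) * ((1 - piG) / (lps B + lpu) - piG / (lps G + lpu))) in E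
    by (field; lra).
  nra.
Qed.

Lemma symmetric_wardrop_intro :
  alpha <= beta_tauB lps lpu tau alpha ->
  (0 < alpha -> piG / lps G <= (1 - piG) / lps B) ->
  (alpha < beta_tauB lps lpu tau alpha ->
     (1 - piG) / (lps B + lpu) <= piG / (lps G + lpu)) ->
  symmetric_wardrop piG lps lpu tau alpha.
Proof.
  intros Hbeta Hleft Hright.
  split; [lra|]; split; [lra|].
  intros b Hb; destruct (Rtotal_order b alpha) as [Hlt | [-> | Hgt]].
  - apply U_le_alpha_below; [lra | apply Hleft; lra].
  - apply Rle_refl.
  - apply U_le_alpha_above; [lra | apply Hright; lra].
Qed.

End Utility.

Lemma beta_tauB_fixed_point lps lpu tau :
  lps B <> 0 -> beta_tauB lps lpu tau (lps B * tau) = lps B * tau.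
Proof.
  intros HlB; unfold beta_tauB, X, t_alpha.
  replace (tau - lps B * tau / lps B) with 0 by (field; lra).
  rewrite Rmax_left by lra.
  ring.
Qed.

Theorem theorem1 (tau piG lpu : R) (lps : ctype -> R)
  (Htau : 0 < tau) (HpiG : 0 <= piG <= 1)
  (HlB : 0 < lps B) (HlGB : lps B <= lps G) (Hlpu : 0 < lpu) :
  let piB := 1 - piG in
  (* (i) *)
  (piG / lps G >= piB / lps B ->
     symmetric_wardrop piG lps lpu tau 0)
  /\
  (* (ii) *)
  (piG / lps G <= piB / lps B ->
   piG / (lps G + lpu) >= piB / (lps B + lpu) ->
     forall alpha, 0 <= alpha <= beta_tauB lps lpu tau alpha ->
       symmetric_wardrop piG lps lpu tau alpha)
  /\
  (* (iii) *)
  (piG / lps G <= piB / lps B ->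
   piG / (lps G + lpu) < piB / (lps B + lpu) ->
     (exists alpha, alpha = beta_tauB lps lpu tau alpha) /\
     (forall alpha, alpha = beta_tauB lps lpu tau alpha ->
       symmetric_wardrop piG lps lpu tau alpha)).
Proof.
  cbv zeta.
  assert (HlG : 0 < lps G) by lra.
  split; [|split].
  - intros Hratio.
    apply symmetric_wardrop_intro; try lra.
    + apply X_nonneg; lra.
    + intros _; apply Rdiv_le_add_shift; lra.
  - intros Hpush Hpull alpha Ha.
    apply symmetric_wardrop_intro; lra.
  - intros Hpush Hpull; split.
    + exists (lps B * tau); symmetry; apply beta_tauB_fixed_point; lra.
    + intros alpha Ha.
      assert (0 <= alpha) by (rewrite Ha; apply X_nonneg; lra).
      apply symmetric_wardrop_intro; lra.
Qed.
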